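(* In the setting below, for every integer $t$ with $1 \leq t < \tau$ and every $i \in D_t^-$, if $\eta \geq \eta_0$ then $$a_{t+1}^i - a_t^i \geq \max\left(\frac{\eta\|x_i\|^2}{2n(\exp(a_t^i)+1)}, \ \frac{1}{2}\eta\gamma^2 G(w_t)\right).$$
   Context: Dimension $d=2$. Data $x_1,\dots,x_n\in\mathbb{R}^2$ with $\|x_i\|\le 1$, linearly separable (some $w$ has $\langle w,x_i\rangle>0$ for all $i$). $F(w) = \frac{1}{n}\sum_{i=1}^n \log(1+\exp(-\langle w, x_i\rangle))$ and $G(w) = \frac{1}{n}\sum_{i=1}^n \frac{1}{\exp(\langle w, x_i\rangle)+1}$. Maximum margin $\gamma = \max_{\|w\|=1}\min_i \langle w, x_i\rangle$ with maximizer the unit vector $w_*$; $v_*$ is a fixed unit vector orthogonal to $w_*$. Gradient descent: $w_0=0$, $w_{t+1} = w_t - \eta\nabla F(w_t)$ with constant $\eta>0$. $\tilde{w}_t = \langle w_t, v_*\rangle$, $\tilde{x}_i = \langle x_i, v_*\rangle$, $a_t^i = \langle w_t, x_i\rangle$, $D_t^- = \{i\in[n] : \tilde{x}_i\tilde{w}_t < 0\}$. $\tau = \min\{t\ge 0: F(w_t)\le 1/(8\eta)\}$. $\eta_0 = \max(n, \frac{32}{\gamma^2}\log\frac{256}{\gamma^2})$. *)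

From Stdlib Require Import Reals Lra.
Open Scope R_scope.

Definition vec := (R * R)%type.
Definition dot (u v : vec) : R := fst u * fst v + snd u * snd v.
Definition vnorm (u : vec) : R := sqrt (dot u u).
Definition vadd (u v : vec) : vec := (fst u + fst v, snd u + snd v).
Definition vscale (c : R) (u : vec) : vec := (c * fst u, c * snd u).

Fixpoint rsum (n : nat) (f : nat -> R) : R :=
  match n with O => 0 | S m => rsum m f + f m end.
Fixpoint vsum (n : nat) (f : nat -> vec) : vec :=
  match n with O => (0, 0) | S m => vadd (vsum m f) (f m) end.

Definition Floss (n : nat) (x : nat -> vec) (w : vec) : R :=
  / INR n * rsum n (fun i => ln (1 + exp (- dot w (x i)))).
Definition Gfun (n : nat) (x : nat -> vec) (w : vec) : R :=
  / INR n * rsum n (fun i => / (exp (dot w (x i)) + 1)).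

(* gradient of Floss, written out:
   grad F(w) = (1/n) sum_i -x_i / (1 + exp <w,x_i>) *)
Definition gradF (n : nat) (x : nat -> vec) (w : vec) : vec :=
  vscale (/ INR n) (vsum n (fun i => vscale (- / (1 + exp (dot w (x i)))) (x i))).

Fixpoint gd (n : nat) (x : nat -> vec) (eta : R) (t : nat) : vec :=
  match t with
  | O => (0, 0)
  | S s => let w := gd n x eta s in vadd w (vscale (- eta) (gradF n x w))
  end.

Definition eta0 (n : nat) (gamma : R) : R :=
  Rmax (INR n) (32 / gamma ^ 2 * ln (256 / gamma ^ 2)).

From Stdlib Require Import Reals Lra Lia Classical.
Open Scope R_scope.

(* Write [x_j] in the orthonormal frame w*, v* as (alpha_j, beta_j).  The
   increment of the margin of [x_i] is (eta/n) sum_j s_j <x_j, x_i> with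
   s_j = 1/(exp <w_t, x_j> + 1); the alpha-part of each term is at least
   gamma^2 s_j.  A beta-part can only be negative when beta_j has the sign of
   <w_t, v*>, since i is in D_t^-; then <w_t, x_j> >= gamma <w_t, w*> >=
   eta gamma^2 / 2, because gradient descent has pushed w_t along w* by at least
   eta gamma / 2, so s_j <= exp (-eta gamma^2 / 2).  The choice of eta_0 makes
   this error at most gamma^2/(32 eta), while F(w_t) > 1/(8 eta) forces
   G(w_t) > 1/(16 eta); hence the errors cost at most half of gamma^2 G(w_t),
   and keeping only the j = i term instead gives the other bound. *)

Lemma exp_le a b : a <= b -> exp a <= exp b.
Proof. intros H; apply Rnot_lt_le; intros H'; apply exp_lt_inv in H'; lra. Qed.

Lemma ln_1_plus_le y : 0 < 1 + y -> ln (1 + y) <= y.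
Proof.
  intros Hy; apply Rnot_lt_le; intros H.
  apply exp_increasing in H; rewrite exp_ln in H by exact Hy.
  pose proof (exp_ineq1_le y); lra.
Qed.

Lemma exp_neg_margin_le a eta u : 0 < a -> 0 < eta ->
  32 / a * ln (256 / a) <= eta -> eta * a / 2 <= u -> exp (- u) <= a / (32 * eta).
Proof.
  intros Ha Heta Hle Hu.
  set (c := eta * a).
  assert (Hc : 0 < c) by (unfold c; nra).
  assert (Hp : 256 <= a * exp (c / 32)).
  { assert (Hln : ln (256 / a) <= c / 32).
    { unfold c; apply Rmult_le_reg_l with (32 / a); [apply Rdiv_lt_0_compat; lra|].
      replace (32 / a * (eta * a / 32)) with eta by (field; lra); lra. }
    apply exp_le in Hln; rewrite exp_ln in Hln by (apply Rdiv_lt_0_compat; lra).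
    apply Rmult_le_compat_l with (r := a) in Hln; [|lra].
    replace (a * (256 / a)) with 256 in Hln by (field; lra); lra. }
  assert (Hq : 7 * c / 16 <= exp (7 * c / 16)) by (pose proof (exp_ineq1_le (7 * c / 16)); lra).
  assert (Hsplit : exp (c / 2) = exp (c / 32) * exp (c / 32) * exp (7 * c / 16)).
  { rewrite <- !exp_plus; f_equal; field. }
  assert (Hbig : 32 * eta <= a * exp (c / 2)).
  { apply Rmult_le_reg_l with a; [lra|].
    replace (a * (32 * eta)) with (32 * c) by (unfold c; ring).
    rewrite Hsplit.
    replace (a * (a * (exp (c / 32) * exp (c / 32) * exp (7 * c / 16))))
      with ((a * exp (c / 32)) * (a * exp (c / 32)) * exp (7 * c / 16)) by ring.
    assert (65536 <= (a * exp (c / 32)) * (a * exp (c / 32))) by nra.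
    nra. }
  apply Rle_trans with (exp (- (c / 2))); [apply exp_le; unfold c; lra|].
  rewrite exp_Ropp; pose proof (exp_pos (c / 2)).
  apply Rmult_le_reg_l with (32 * eta * exp (c / 2)); [nra|].
  replace (32 * eta * exp (c / 2) * / exp (c / 2)) with (32 * eta) by (field; lra).
  replace (32 * eta * exp (c / 2) * (a / (32 * eta))) with (a * exp (c / 2)) by (field; lra).
  exact Hbig.
Qed.

(* sigma(-a) = -l'(a) for the logistic loss l(a) = ln (1 + exp (-a)). *)
Definition sigmoid_neg (a : R) : R := / (exp a + 1).

Lemma sigmoid_neg_pos a : 0 < sigmoid_neg a.
Proof. unfold sigmoid_neg; pose proof (exp_pos a); apply Rinv_0_lt_compat; lra. Qed.

Lemma sigmoid_neg_le_exp_neg a : sigmoid_neg a <= exp (- a).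
Proof.
  unfold sigmoid_neg; rewrite exp_Ropp; pose proof (exp_pos a).
  apply Rinv_le_contravar; lra.
Qed.

Lemma sigmoid_neg_gt_half a : a < 0 -> / 2 < sigmoid_neg a.
Proof.
  intros Ha; unfold sigmoid_neg; pose proof (exp_pos a).
  apply exp_increasing in Ha; rewrite exp_0 in Ha.
  apply Rinv_lt_contravar; nra.
Qed.

Lemma logistic_loss_le a : 0 <= a -> ln (1 + exp (- a)) <= 2 * sigmoid_neg a.
Proof.
  intros Ha; pose proof (exp_pos (- a)).
  eapply Rle_trans; [apply ln_1_plus_le; lra|].
  unfold sigmoid_neg; rewrite exp_Ropp.
  apply exp_le in Ha; rewrite exp_0 in Ha.
  pose proof (exp_pos a).
  replace (/ exp a) with (2 * / (2 * exp a)) by (field; lra).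
  apply Rmult_le_compat_l; [lra|]; apply Rinv_le_contravar; lra.
Qed.

Lemma rsum_ext n f g : (forall j, (j < n)%nat -> f j = g j) -> rsum n f = rsum n g.
Proof.
  induction n as [|n IH]; intros H; simpl; [reflexivity|].
  rewrite IH by (intros j Hj; apply H; lia); rewrite H by lia; reflexivity.
Qed.

Lemma rsum_le n f g : (forall j, (j < n)%nat -> f j <= g j) -> rsum n f <= rsum n g.
Proof.
  induction n as [|n IH]; intros H; simpl; [lra|].
  pose proof (IH (fun j Hj => H j ltac:(lia))); pose proof (H n ltac:(lia)); lra.
Qed.

Lemma rsum_nonneg n f : (forall j, (j < n)%nat -> 0 <= f j) -> 0 <= rsum n f.
Proof.
  induction n as [|n IH]; intros H; simpl; [lra|].
  pose proof (IH (fun j Hj => H j ltac:(lia))); pose proof (H n ltac:(lia)); lra.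
Qed.

Lemma rsum_ge_term n f k : (forall j, (j < n)%nat -> 0 <= f j) -> (k < n)%nat ->
  f k <= rsum n f.
Proof.
  induction n as [|n IH]; intros H Hk; simpl; [lia|].
  destruct (Nat.eq_dec k n) as [->|Hkn].
  - pose proof (rsum_nonneg n f (fun j Hj => H j ltac:(lia))); lra.
  - pose proof (IH (fun j Hj => H j ltac:(lia)) ltac:(lia)); pose proof (H n ltac:(lia)); lra.
Qed.

Lemma rsum_scal n c f : rsum n (fun j => c * f j) = c * rsum n f.
Proof. induction n as [|n IH]; simpl; [ring|rewrite IH; ring]. Qed.

Lemma rsum_sub n f g : rsum n (fun j => f j - g j) = rsum n f - rsum n g.
Proof. induction n as [|n IH]; simpl; [ring|rewrite IH; ring]. Qed.

Lemma rsum_const n c : rsum n (fun _ => c) = INR n * c.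
Proof. induction n as [|n IH]; simpl rsum; [simpl; ring|rewrite IH, S_INR; ring]. Qed.

Lemma rsum_Rmax_lower n (T g : nat -> R) c e i : (i < n)%nat -> 0 <= c -> 0 <= e ->
  (forall j, (j < n)%nat -> 0 <= g j) ->
  (forall j, (j < n)%nat -> c * g j - e <= T j) ->
  INR n * e <= c * rsum n g / 2 ->
  Rmax (T i / 2) (c * rsum n g / 2) <= rsum n T.
Proof.
  intros Hi Hc He Hg HT Hne.
  assert (Hsum : forall a, rsum n (fun j => a * g j - e) = a * rsum n g - INR n * e).
  { intros a; rewrite rsum_sub, rsum_scal, rsum_const; reflexivity. }
  apply Rmax_lub.
  - assert (Hd : forall j, (j < n)%nat -> 0 <= T j - (c / 2 * g j - e)).
    { intros j Hj; pose proof (HT j Hj); pose proof (Hg j Hj); nra. }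
    pose proof (rsum_ge_term _ _ _ Hd Hi) as Hi'.
    rewrite rsum_sub, Hsum in Hi'.
    pose proof (HT i Hi); lra.
  - pose proof (rsum_le _ _ _ HT) as Hlow; rewrite Hsum in Hlow; lra.
Qed.
Lemma dot_comm u v : dot u v = dot v u.
Proof. unfold dot; ring. Qed.

Lemma dot_vadd_l u v y : dot (vadd u v) y = dot u y + dot v y.
Proof. unfold dot, vadd; simpl; ring. Qed.

Lemma dot_vscale_l c u y : dot (vscale c u) y = c * dot u y.
Proof. unfold dot, vscale; simpl; ring. Qed.

Lemma dot_vsum n f y : dot (vsum n f) y = rsum n (fun j => dot (f j) y).
Proof.
  induction n as [|n IH]; simpl.
  - unfold dot; simpl; ring.
  - rewrite dot_vadd_l, IH; reflexivity.
Qed.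

Lemma dot_self_nonneg u : 0 <= dot u u.
Proof. unfold dot; nra. Qed.

Lemma vnorm_sq u : vnorm u ^ 2 = dot u u.
Proof. apply pow2_sqrt, dot_self_nonneg. Qed.

Lemma dot_self_le_1 u : vnorm u <= 1 -> dot u u <= 1.
Proof. intros H; rewrite <- vnorm_sq; assert (0 <= vnorm u) by apply sqrt_pos; nra. Qed.

Lemma dot_self_unit u : vnorm u = 1 -> dot u u = 1.
Proof. intros H; rewrite <- vnorm_sq, H; ring. Qed.

Lemma vnorm_vscale c u : 0 <= c -> vnorm (vscale c u) = c * vnorm u.
Proof.
  intros Hc; unfold vnorm.
  replace (dot (vscale c u) (vscale c u)) with (c * c * dot u u)
    by (unfold dot, vscale; simpl; ring).
  rewrite sqrt_mult_alt, sqrt_square by nra; reflexivity.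
Qed.

Lemma vnorm_pos_of_dot_pos w y : 0 < dot w y -> 0 < vnorm w.
Proof.
  intros H; apply sqrt_lt_R0.
  destruct w as [w1 w2], y as [y1 y2]; unfold dot in *; simpl in *.
  destruct (Req_dec w1 0), (Req_dec w2 0); subst; nra.
Qed.

Lemma max_margin_pos n (x : nat -> vec) gamma : (0 < n)%nat ->
  (exists w, forall i, (i < n)%nat -> 0 < dot w (x i)) ->
  (forall w, vnorm w = 1 -> exists i, (i < n)%nat /\ dot w (x i) <= gamma) ->
  0 < gamma.
Proof.
  intros Hn [w Hw] Hmax.
  pose proof (vnorm_pos_of_dot_pos _ _ (Hw 0%nat Hn)) as Hpos.
  destruct (Hmax (vscale (/ vnorm w) w)) as [k [Hk Hle]].
  - rewrite vnorm_vscale by (left; apply Rinv_0_lt_compat; lra); field; lra.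
  - rewrite dot_vscale_l in Hle.
    pose proof (Hw k Hk); pose proof (Rinv_0_lt_compat _ Hpos); nra.
Qed.

Section OrthonormalFrame.

Variables w v : vec.
Hypotheses (Hw : dot w w = 1) (Hv : dot v v = 1) (Hwv : dot w v = 0).

Lemma dot_frame_expand y z : dot y z = dot y w * dot z w + dot y v * dot z v.
Proof.
  revert Hw Hv Hwv.
  destruct w as [w1 w2], v as [v1 v2], y as [y1 y2], z as [z1 z2]; unfold dot; simpl.
  intros Hw' Hv' Hwv'.
  (* in the plane, v = k (-w2, w1) with k = +-1 *)
  set (k := w1 * v2 - w2 * v1).
  assert (Hv1 : v1 = - w2 * k).
  { transitivity (v1 * (w1 * w1 + w2 * w2) - w1 * (w1 * v1 + w2 * v2));
      [rewrite Hw', Hwv'; ring|unfold k; ring]. }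
  assert (Hv2 : v2 = w1 * k).
  { transitivity (v2 * (w1 * w1 + w2 * w2) - w2 * (w1 * v1 + w2 * v2));
      [rewrite Hw', Hwv'; ring|unfold k; ring]. }
  assert (Hk : k * k = 1).
  { rewrite Hv1, Hv2 in Hv'.
    transitivity (k * k * (w1 * w1 + w2 * w2)); [rewrite Hw'; ring|rewrite <- Hv'; ring]. }
  clearbody k; subst v1 v2.
  transitivity ((y1 * z1 + y2 * z2) * (w1 * w1 + w2 * w2)); [rewrite Hw'; ring|].
  transitivity ((y1 * w1 + y2 * w2) * (z1 * w1 + z2 * w2)
                 + k * k * ((y2 * w1 - y1 * w2) * (z2 * w1 - z1 * w2))); [rewrite Hk|]; ring.
Qed.

Lemma dot_frame_sq_le y : dot y y <= 1 -> dot y v ^ 2 <= 1.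
Proof. intros H; rewrite dot_frame_expand in H; nra. Qed.

Lemma sigmoid_neg_mul_dot_ge gamma W xj xi :
  0 <= gamma -> gamma <= dot xj w -> gamma <= dot xi w ->
  dot xj xj <= 1 -> dot xi xi <= 1 ->
  0 <= dot W w -> dot xi v * dot W v < 0 ->
  gamma ^ 2 * sigmoid_neg (dot W xj) - exp (- (gamma * dot W w))
    <= sigmoid_neg (dot W xj) * dot xj xi.
Proof.
  intros Hg Hj Hi Hxj Hxi Hu Hs.
  pose proof (sigmoid_neg_pos (dot W xj)) as Hsig.
  pose proof (exp_pos (- (gamma * dot W w))) as He.
  rewrite (dot_frame_expand xj xi).
  assert (Hal : gamma ^ 2 <= dot xj w * dot xi w) by nra.
  enough (- exp (- (gamma * dot W w)) <= sigmoid_neg (dot W xj) * (dot xj v * dot xi v)) by nra.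
  destruct (Rle_lt_dec 0 (dot xj v * dot xi v)) as [Hb|Hb]; [nra|].
  assert (Hside : 0 < dot xj v * dot W v).
  { assert (0 < (dot xj v * dot xi v) * (dot xi v * dot W v)) by nra.
    pose proof (pow2_ge_0 (dot xi v)); nra. }
  assert (Hmargin : gamma * dot W w <= dot W xj) by (rewrite (dot_frame_expand W xj); nra).
  assert (Hsmall : sigmoid_neg (dot W xj) <= exp (- (gamma * dot W w))).
  { eapply Rle_trans; [apply sigmoid_neg_le_exp_neg|apply exp_le; lra]. }
  pose proof (dot_frame_sq_le xj Hxj); pose proof (dot_frame_sq_le xi Hxi).
  assert (-1 <= dot xj v * dot xi v) by nra.
  nra.
Qed.

End OrthonormalFrame.

Lemma Gfun_ge_min n x w : (0 < n)%nat ->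
  Rmin (Floss n x w / 2) (/ (2 * INR n)) <= Gfun n x w.
Proof.
  intros Hn.
  assert (HnR : 0 < INR n) by (apply lt_0_INR; lia).
  change (Gfun n x w) with (/ INR n * rsum n (fun j => sigmoid_neg (dot w (x j)))).
  destruct (classic (exists k, (k < n)%nat /\ dot w (x k) < 0)) as [[k [Hk Hneg]]|Hnone].
  - eapply Rle_trans; [apply Rmin_r|].
    pose proof (rsum_ge_term n (fun j => sigmoid_neg (dot w (x j))) k
                  (fun j _ => Rlt_le _ _ (sigmoid_neg_pos _)) Hk) as Hterm.
    pose proof (sigmoid_neg_gt_half _ Hneg).
    replace (/ (2 * INR n)) with (/ INR n * / 2) by (field; lra).
    apply Rmult_le_compat_l; [apply Rlt_le, Rinv_0_lt_compat|]; lra.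
  - eapply Rle_trans; [apply Rmin_l|].
    assert (Hloss : rsum n (fun j => ln (1 + exp (- dot w (x j))))
                    <= rsum n (fun j => 2 * sigmoid_neg (dot w (x j)))).
    { apply rsum_le; intros j Hj; apply logistic_loss_le.
      apply Rnot_lt_le; intros Hneg; apply Hnone; exists j; split; assumption. }
    rewrite rsum_scal in Hloss.
    unfold Floss.
    pose proof (Rinv_0_lt_compat _ HnR); nra.
Qed.

Lemma Gfun_gt_of_Floss_gt n x w eta : (0 < n)%nat -> INR n <= eta ->
  1 / (8 * eta) < Floss n x w -> / (16 * eta) < Gfun n x w.
Proof.
  intros Hn Heta HF.
  assert (HnR : 0 < INR n) by (apply lt_0_INR; lia).
  eapply Rlt_le_trans; [|apply Gfun_ge_min; exact Hn].
  apply Rmin_glb_lt.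
  - replace (/ (16 * eta)) with (1 / (8 * eta) / 2) by (field; lra); lra.
  - apply Rinv_lt_contravar; nra.
Qed.

Section GradientDescent.

Variables (n : nat) (x : nat -> vec) (eta : R).
Hypotheses (Hn : (0 < n)%nat) (Heta : 0 < eta).

Lemma dot_gd_S t y : dot (gd n x eta (S t)) y = dot (gd n x eta t) y +
  eta / INR n * rsum n (fun j => sigmoid_neg (dot (gd n x eta t) (x j)) * dot (x j) y).
Proof.
  simpl gd; unfold gradF; rewrite dot_vadd_l, !dot_vscale_l, dot_vsum.
  rewrite (rsum_ext n _ (fun j => -1 * (sigmoid_neg (dot (gd n x eta t) (x j)) * dot (x j) y))).
  - rewrite rsum_scal; unfold Rdiv; ring.
  - intros j _; rewrite dot_vscale_l; unfold sigmoid_neg; rewrite (Rplus_comm 1); ring.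
Qed.

Lemma dot_gd_S_ge y gamma : 0 <= gamma -> (forall j, (j < n)%nat -> gamma <= dot (x j) y) ->
  forall t, eta * gamma / 2 <= dot (gd n x eta (S t)) y.
Proof.
  intros Hg Hy.
  assert (HnR : 0 < INR n) by (apply lt_0_INR; lia).
  induction t as [|t IH].
  - rewrite dot_gd_S.
    assert (Hsum : rsum n (fun _ => gamma / 2)
      <= rsum n (fun j => sigmoid_neg (dot (gd n x eta 0) (x j)) * dot (x j) y)).
    { apply rsum_le; intros j Hj; simpl gd.
      replace (dot (0, 0) (x j)) with 0 by (unfold dot; simpl; ring).
      unfold sigmoid_neg; rewrite exp_0; pose proof (Hy j Hj); lra. }
    rewrite rsum_const in Hsum.
    replace (dot (gd n x eta 0) y) with 0 by (unfold dot; simpl; ring).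
    replace (eta * gamma / 2) with (eta / INR n * (INR n * (gamma / 2))) by (field; lra).
    apply Rmult_le_compat_l with (r := eta / INR n) in Hsum;
      [lra|apply Rlt_le, Rdiv_lt_0_compat; lra].
  - rewrite (dot_gd_S (S t)).
    assert (0 <= rsum n (fun j => sigmoid_neg (dot (gd n x eta (S t)) (x j)) * dot (x j) y)).
    { apply rsum_nonneg; intros j Hj.
      pose proof (sigmoid_neg_pos (dot (gd n x eta (S t)) (x j))); pose proof (Hy j Hj); nra. }
    assert (0 < eta / INR n) by (apply Rdiv_lt_0_compat; lra).
    nra.
Qed.

Lemma dot_gd_S_sub_ge t i gamma e : (i < n)%nat -> 0 <= e ->
  (forall j, (j < n)%nat ->
     gamma ^ 2 * sigmoid_neg (dot (gd n x eta t) (x j)) - e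
       <= sigmoid_neg (dot (gd n x eta t) (x j)) * dot (x j) (x i)) ->
  e <= gamma ^ 2 * Gfun n x (gd n x eta t) / 2 ->
  dot (gd n x eta (S t)) (x i) - dot (gd n x eta t) (x i) >=
  Rmax (eta * vnorm (x i) ^ 2 / (2 * INR n * (exp (dot (gd n x eta t) (x i)) + 1)))
       (1 / 2 * eta * gamma ^ 2 * Gfun n x (gd n x eta t)).
Proof.
  intros Hi He Hterm Herr.
  assert (HnR : 0 < INR n) by (apply lt_0_INR; lia).
  assert (Hstep : 0 < eta / INR n) by (apply Rdiv_lt_0_compat; lra).
  set (g := fun j => sigmoid_neg (dot (gd n x eta t) (x j))).
  assert (HG : rsum n g = INR n * Gfun n x (gd n x eta t))
    by (unfold Gfun, g, sigmoid_neg; field; lra).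
  assert (Hsum : Rmax (g i * dot (x i) (x i) / 2) (gamma ^ 2 * rsum n g / 2)
                 <= rsum n (fun j => g j * dot (x j) (x i))).
  { apply (rsum_Rmax_lower n (fun j => g j * dot (x j) (x i)) g (gamma ^ 2) e i Hi);
      auto using pow2_ge_0.
    - intros j _; apply Rlt_le, sigmoid_neg_pos.
    - rewrite HG; nra. }
  rewrite dot_gd_S.
  replace (Rmax _ _) with (eta / INR n * Rmax (g i * dot (x i) (x i) / 2) (gamma ^ 2 * rsum n g / 2)).
  - apply Rmult_le_compat_l with (r := eta / INR n) in Hsum; [|lra].
    unfold g in *; lra.
  - pose proof (exp_pos (dot (gd n x eta t) (x i))).
    rewrite <- RmaxRmult, HG by lra.
    unfold g, sigmoid_neg; rewrite vnorm_sq; f_equal; field; lra.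
Qed.

End GradientDescent.

Theorem lemma5 (n : nat) (x : nat -> vec) (eta gamma : R) (wstar vstar : vec) :
  (0 < n)%nat ->
  (forall i, (i < n)%nat -> vnorm (x i) <= 1) ->
  (exists w : vec, forall i, (i < n)%nat -> 0 < dot w (x i)) ->
  (* gamma = max_{|w|=1} min_i <w,x_i>, attained at the unit vector wstar *)
  vnorm wstar = 1 ->
  (forall i, (i < n)%nat -> gamma <= dot wstar (x i)) ->
  (forall w : vec, vnorm w = 1 -> exists i, (i < n)%nat /\ dot w (x i) <= gamma) ->
  (* vstar : unit vector orthogonal to wstar *)
  vnorm vstar = 1 -> dot wstar vstar = 0 ->
  0 < eta ->
  forall (t i : nat),
  (1 <= t)%nat ->
  (* t < tau, where tau = min {s | F(w_s) <= 1/(8 eta)} *)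
  (forall s, (s <= t)%nat -> 1 / (8 * eta) < Floss n x (gd n x eta s)) ->
  (i < n)%nat ->
  (* i in D_t^- *)
  dot (x i) vstar * dot (gd n x eta t) vstar < 0 ->
  eta >= eta0 n gamma ->
  dot (gd n x eta (S t)) (x i) - dot (gd n x eta t) (x i) >=
  Rmax (eta * vnorm (x i) ^ 2 / (2 * INR n * (exp (dot (gd n x eta t) (x i)) + 1)))
       (1 / 2 * eta * gamma ^ 2 * Gfun n x (gd n x eta t)).
Proof.
  intros Hn Hx Hsep Hws Hgam Hmax Hvs Horth Heta t i Ht HF Hi HD Heta0.
  assert (Hgamma : 0 < gamma) by exact (max_margin_pos n x gamma Hn Hsep Hmax).
  assert (Hal : forall j, (j < n)%nat -> gamma <= dot (x j) wstar)
    by (intros j Hj; rewrite dot_comm; auto).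
  unfold eta0 in Heta0.
  pose proof (Rmax_l (INR n) (32 / gamma ^ 2 * ln (256 / gamma ^ 2))) as Hn_eta.
  pose proof (Rmax_r (INR n) (32 / gamma ^ 2 * ln (256 / gamma ^ 2))) as Hln_eta.
  destruct t as [|t]; [lia|]; set (W := gd n x eta (S t)) in *.
  assert (Hu : eta * gamma / 2 <= dot W wstar) by (apply dot_gd_S_ge; auto; lra).
  assert (Hu0 : 0 <= dot W wstar) by nra.
  assert (He : exp (- (gamma * dot W wstar)) <= gamma ^ 2 / (32 * eta))
    by (apply exp_neg_margin_le; try apply pow_lt; nra).
  assert (HG : / (16 * eta) < Gfun n x W) by (apply Gfun_gt_of_Floss_gt; [exact Hn|lra|apply HF; lia]).
  apply (dot_gd_S_sub_ge n x eta Hn Heta (S t) i gamma (exp (- (gamma * dot W wstar)))); auto.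
  - apply Rlt_le, exp_pos.
  - intros j Hj; apply (sigmoid_neg_mul_dot_ge wstar vstar);
      auto using dot_self_unit, dot_self_le_1; lra.
  - fold W; replace (gamma ^ 2 / (32 * eta)) with (gamma ^ 2 * / (16 * eta) / 2) in He by (field; lra).
    pose proof (pow_lt gamma 2 Hgamma); nra.
Qed.
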